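(* The function $\Phi(M^1,\dots,M^n)=\sum_{p\in N}2|M^p|+|M^I(M^1,\dots,M^n)|$ is in general not a potential function for the #-KEG with more than two players: there exist a 3-player #-KEG instance, a deterministic maximum-cardinality IA algorithm $\mathcal{A}$, and a sequence of unilateral deviations of one player, each strictly increasing that player's utility, along which $\Phi$ does not strictly increase at every step.
   Context: The #-KEG: players $N=\{1,\dots,n\}$; player $p$ has internal graph $G^p=(V^p,E^p)$ (pairwise disjoint vertex sets); $E^I$ is a set of external edges each joining vertices of two different players; $G=(V,E)$ with $V=\bigcup_pV^p$, $E=E^I\cup\bigcup_pE^p$. A strategy of player $p$ is a matching $M^p$ of $G^p$; the IA selects, via a deterministic algorithm $\mathcal{A}$, a maximum-cardinality matching $M^I(M^1,\dots,M^n)$ of the external edges whose endpoints are uncovered by $\bigcup_pM^p$. Player $p$'s utility is $2|M^p|+|M^I_p|$, where $M^I_p$ is the set of edges of $M^I$ incident to $V^p$. A function $\Phi$ on strategy profiles is a potential function if its value strictly increases whenever a player unilaterally switches to a strategy that strictly increases her utility. *)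

From mathcomp Require Import all_boot.
Set Implicit Arguments. Unset Strict Implicit. Unset Printing Implicit Defensive.

(* A #-KEG instance: players 'I_n, vertex type V (finite), owner v = the player
   whose internal graph contains v (so the V^p are pairwise disjoint),
   edge set E : a set of 2-element vertex sets. *)

Definition simple_edges (V : finType) (E : {set {set V}}) : Prop :=
  forall e, e \in E -> #|e| = 2.

Definition internal_edges (n : nat) (V : finType) (owner : V -> 'I_n)
  (E : {set {set V}}) (p : 'I_n) : {set {set V}} :=
  [set e in E | [forall v in e, owner v == p]].

Definition external_edges (n : nat) (V : finType) (owner : V -> 'I_n)
  (E : {set {set V}}) : {set {set V}} :=
  [set e in E | [exists u in e, exists v in e, owner u != owner v]].

Definition is_matching (V : finType) (M : {set {set V}}) : Prop :=
  forall e f, e \in M -> f \in M -> e != f -> [disjoint e & f].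

Definition is_strategy (n : nat) (V : finType) (owner : V -> 'I_n)
  (E : {set {set V}}) (p : 'I_n) (M : {set {set V}}) : Prop :=
  M \subset internal_edges owner E p /\ is_matching M.

Definition profile (n : nat) (V : finType) := 'I_n -> {set {set V}}.

Definition valid_profile (n : nat) (V : finType) (owner : V -> 'I_n)
  (E : {set {set V}}) (S : profile n V) : Prop :=
  forall p, is_strategy owner E p (S p).

Definition covered (n : nat) (V : finType) (S : profile n V) : {set V} :=
  \bigcup_(p < n) \bigcup_(e in S p) e.

Definition available_edges (n : nat) (V : finType) (owner : V -> 'I_n)
  (E : {set {set V}}) (S : profile n V) : {set {set V}} :=
  [set e in external_edges owner E | [disjoint e & covered S]].

Definition valid_IA (n : nat) (V : finType) (owner : V -> 'I_n)
  (E : {set {set V}}) (A : profile n V -> {set {set V}}) : Prop :=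
  forall S, valid_profile owner E S ->
    [/\ A S \subset available_edges owner E S, is_matching (A S) &
        forall M : {set {set V}}, M \subset available_edges owner E S -> is_matching M ->
          #|M| <= #|A S| ].

Definition utility (n : nat) (V : finType) (owner : V -> 'I_n)
  (A : profile n V -> {set {set V}}) (S : profile n V) (p : 'I_n) : nat :=
  2 * #|S p| + #|[set e in A S | [exists v in e, owner v == p]]|.

Definition Phi (n : nat) (V : finType) (A : profile n V -> {set {set V}})
  (S : profile n V) : nat :=
  \sum_(p < n) 2 * #|S p| + #|A S|.

Definition improving_deviation (n : nat) (V : finType) (owner : V -> 'I_n)
  (E : {set {set V}}) (A : profile n V -> {set {set V}})
  (S S' : profile n V) : Prop :=
  exists p : 'I_n,
    [/\ is_strategy owner E p (S' p),
        (forall q, q != p -> S' q = S q) &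
        utility owner A S p < utility owner A S' p].

(* Player 0 owns the internal path 3-4-5; the external path 0-1-2 runs from
   player 0's vertex 0 through player 1's vertex 1 to player 2's vertex 2.
   Player 0's strategies never cover 0, 1 or 2, so every maximum external
   matching is a single edge of 0-1-2, and a deterministic IA may pick which
   one as a function of the profile: it picks 01 (worth 1 to player 0)
   exactly when player 0 plays 45.  Switching from 34 to 45 raises player 0's
   utility from 2 to 3, while Phi stays 2 + 1 = 3. *)
From mathcomp Require Import all_boot.
Set Implicit Arguments. Unset Strict Implicit. Unset Printing Implicit Defensive.

Section SetsOfSets.

Variable V : finType.

Lemma cards_set1_filter (a : V) (P : pred V) : #|[set x in [set a] | P x]| = P a.
Proof.
have -> : [set x in [set a] | P x] = if P a then [set a] else set0.
  by apply/setP => x; rewrite !inE; case: eqVneq => [->|];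
    case: ifP => _; rewrite !inE ?eqxx // => /negbTE ->.
by case: (P a); rewrite ?cards1 ?cards0.
Qed.

Lemma exists_in_set2 (x y : V) (P : pred V) :
  [exists v in [set x; y], P v] = P x || P y.
Proof.
apply/exists_inP/orP => [[v + Pv] | [Px | Py]]; last 2 first.
- by exists x; rewrite ?inE ?eqxx.
- by exists y; rewrite ?inE ?eqxx ?orbT.
by rewrite !inE => /orP[] /eqP vE; [left | right]; rewrite -vE.
Qed.

Lemma forall_in_set2 (x y : V) (P : pred V) :
  [forall v in [set x; y], P v] = P x && P y.
Proof. by rewrite -[LHS]negbK negb_forall_in exists_in_set2 negb_or !negbK. Qed.

Lemma matching_set0 : is_matching (set0 : {set {set V}}).
Proof. by move=> e f; rewrite inE. Qed.

Lemma matching_set1 (e : {set V}) : is_matching [set e].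
Proof. by move=> f g; rewrite !inE => /eqP -> /eqP ->; rewrite eqxx. Qed.

Lemma matching_meeting_pair_card (a b : {set V}) (M : {set {set V}}) :
  ~~ [disjoint a & b] -> M \subset [set a; b] -> is_matching M -> #|M| <= 1.
Proof.
move=> meet_ab sub_M match_M; rewrite leqNgt.
apply/card_gt1P => -[e [f [Me Mf ef]]]; have := match_M e f Me Mf ef.
move: (subsetP sub_M e Me) (subsetP sub_M f Mf) ef; rewrite !inE.
by do 2!case/orP=> /eqP->; rewrite ?eqxx ?(disjoint_sym b a) ?(negbTE meet_ab).
Qed.

End SetsOfSets.

Notation vertex := 'I_6.
Definition v0 : vertex := @Ordinal 6 0 isT.
Definition v1 : vertex := @Ordinal 6 1 isT.
Definition v2 : vertex := @Ordinal 6 2 isT.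
Definition v3 : vertex := @Ordinal 6 3 isT.
Definition v4 : vertex := @Ordinal 6 4 isT.
Definition v5 : vertex := @Ordinal 6 5 isT.
Definition p0 : 'I_3 := @Ordinal 3 0 isT.
Definition p1 : 'I_3 := @Ordinal 3 1 isT.
Definition p2 : 'I_3 := @Ordinal 3 2 isT.

Definition owner (v : vertex) : 'I_3 :=
  if val v == 1 then p1 else if val v == 2 then p2 else p0.

Definition e01 : {set vertex} := [set v0; v1].
Definition e12 : {set vertex} := [set v1; v2].
Definition e34 : {set vertex} := [set v3; v4].
Definition e45 : {set vertex} := [set v4; v5].
Definition edges : {set {set vertex}} := [set e01; e12; e34; e45].

Definition IA (S : profile 3 vertex) : {set {set vertex}} :=
  if e45 \in S p0 then [set e01] else [set e12].

Definition play (e : {set vertex}) : profile 3 vertex :=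
  fun p => if p == p0 then [set e] else set0.

Lemma e34_neq_e45 : e34 != e45.
Proof. by apply/eqP => /setP/(_ v3); rewrite !inE. Qed.

Lemma in_edges e : (e \in edges) = [|| e == e01, e == e12, e == e34 | e == e45].
Proof. by rewrite !inE -!orbA. Qed.

Lemma simple_edges_instance : simple_edges edges.
Proof. by move=> e; rewrite in_edges => /or4P[] /eqP ->; rewrite cards2. Qed.

Lemma external_edgesE : external_edges owner edges = [set e01; e12].
Proof.
apply/eqP; rewrite eqEsubset; apply/andP; split; apply/subsetP => e.
  by rewrite inE in_edges => /andP[/or4P[] /eqP ->]; rewrite !exists_in_set2 !inE ?eqxx ?orbT.
by rewrite !inE => /orP[] /eqP ->; rewrite !eqxx ?orbT !exists_in_set2.
Qed.

Lemma internal_edges_sub p : internal_edges owner edges p \subset [set e34; e45].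
Proof.
apply/subsetP => e; rewrite inE in_edges => /andP[/or4P[] /eqP ->];
  by rewrite forall_in_set2 !inE ?eqxx ?orbT // => /andP[/eqP <-].
Qed.

Lemma internal_edges_p0 : [set e34; e45] \subset internal_edges owner edges p0.
Proof.
by apply/subsetP => e; rewrite !inE => /orP[] /eqP ->; rewrite forall_in_set2 !eqxx ?orbT.
Qed.

Lemma covered_sub S : valid_profile owner edges S -> covered S \subset [set v3; v4; v5].
Proof.
move=> valid_S; apply/subsetP => v /bigcupP[p _ /bigcupP[e Se ve]].
have [/subsetP sub_int _] := valid_S p.
move: (subsetP (internal_edges_sub p) e (sub_int e Se)) ve.
by rewrite !inE => /orP[] /eqP ->; rewrite !inE => /orP[] /eqP ->; rewrite eqxx ?orbT.
Qed.

Lemma available_edgesE S :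
  valid_profile owner edges S -> available_edges owner edges S = [set e01; e12].
Proof.
move=> valid_S; apply/setP => e; rewrite inE external_edgesE andb_idr // => e_ext.
apply: disjointWr (covered_sub valid_S) _; apply/pred0P => v /=.
by move: e_ext; rewrite !inE => /orP[] /eqP ->; rewrite !inE;
  apply/negbTE/andP => -[/orP[] /eqP ->].
Qed.

Lemma IA_valid : valid_IA owner edges IA.
Proof.
move=> S valid_S; rewrite available_edgesE //; split.
- by rewrite /IA; case: ifP => _; rewrite sub1set !inE eqxx ?orbT.
- by rewrite /IA; case: ifP => _; apply: matching_set1.
move=> M sub_M match_M; have -> : #|IA S| = 1 by rewrite /IA; case: ifP; rewrite cards1.
apply: matching_meeting_pair_card sub_M match_M.
by apply/pred0Pn; exists v1; rewrite /= !inE eqxx ?orbT.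
Qed.

Lemma play_valid e : e \in [set e34; e45] -> valid_profile owner edges (play e).
Proof.
move=> e_int p; rewrite /play; case: eqP => [->|_]; split.
- by rewrite sub1set (subsetP internal_edges_p0).
- exact: matching_set1.
- exact: sub0set.
- exact: matching_set0.
Qed.

Lemma IA_play e : IA (play e) = if e == e45 then [set e01] else [set e12].
Proof. by rewrite /IA /play eqxx inE eq_sym. Qed.

Lemma utility_play e : utility owner IA (play e) p0 = 2 + (e == e45).
Proof.
rewrite /utility IA_play /play eqxx cards1.
by case: eqP => _; rewrite cards_set1_filter exists_in_set2.
Qed.

Lemma Phi_play e : Phi IA (play e) = 3.
Proof.
rewrite /Phi IA_play !big_ord_recr big_ord0 /play /= cards1 !cards0.
by case: ifP; rewrite cards1.
Qed.

Lemma improving_deviation_e34_e45 :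
  improving_deviation owner edges IA (play e34) (play e45).
Proof.
exists p0; split.
- by apply: play_valid; rewrite !inE eqxx orbT.
- by move=> q /negbTE q_p0; rewrite /play q_p0.
by rewrite !utility_play eqxx (negbTE e34_neq_e45).
Qed.

Theorem mainTheorem5 :
  exists (V : finType) (owner : V -> 'I_3) (E : {set {set V}})
         (A : profile 3 V -> {set {set V}}),
    [/\ simple_edges E, valid_IA owner E A &
      exists (k : nat) (S : nat -> profile 3 V),
        [/\ 0 < k, valid_profile owner E (S 0),
            (forall i, i < k -> improving_deviation owner E A (S i) (S i.+1)) &
            exists2 i, i < k & ~ (Phi A (S i) < Phi A (S i.+1))]].
Proof.
exists vertex, owner, edges, IA; split.
- exact: simple_edges_instance.
- exact: IA_valid.
exists 1, (fun i => if i == 0 then play e34 else play e45); split => //.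
- by apply: play_valid; rewrite !inE eqxx.
- by case=> // _; apply: improving_deviation_e34_e45.
by exists 0 => //=; rewrite !Phi_play.
Qed.
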